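(* Let $\mathcal{C}$ be an abelian category and $\mathcal{A}$ the abelian category whose objects are complexes $[A\xrightarrow{}B\xrightarrow{f}C]$ in $\mathcal{C}$ (degrees $-2,-1,0$) with the first map injective and exact at $B$, morphisms being chain maps modulo homotopy. Let $\phi=(\phi_A,\phi_B,\phi_C):[A\to B\xrightarrow{f}C]\to[A'\to B'\xrightarrow{f'}C']$ be a morphism in $\mathcal{A}$ (represented by a chain map). Then: (i) If $[A'\to B'\xrightarrow{f'}C']\neq 0$ in $\mathcal{A}$ and $\mathrm{End}_{\mathcal{C}}(C')$ is a local ring, then $\phi$ is an epimorphism in $\mathcal{A}$ if and only if $\phi_C$ is a split surjection. (ii) $\phi$ is a monomorphism in $\mathcal{A}$ if and only if the induced map $\bar\phi_C: C/\operatorname{Im} f\to C'/\operatorname{Im} f'$ is injective and the canonical injection $A\to B\oplus\operatorname{Ker} f'$, $a\mapsto (a,-\phi_B(a))$ (where $A$ is identified with its image $\operatorname{Ker} f\subset B$), is a split injection.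
   Context: Here $\mathcal{A}$ is the heart of the $t$-structure on $K^b(\mathcal{C})$ with $D^{\leq 0}=\{X: X^i=0,\ i>0\}$ and $D^{\geq 0}=\{X: X^i=0,\ i<-2,\ H^{-2}(X)=H^{-1}(X)=0\}$ (up to homotopy equivalence). Note $-\phi_B(a)\in\operatorname{Ker} f'$ since $f'\phi_B=\phi_C f$. *)

From HB Require Import structures.
From mathcomp Require Import all_boot ssralg.
Set Implicit Arguments. Unset Strict Implicit. Unset Printing Implicit Defensive.
Import GRing.Theory.
Local Open Scope ring_scope.

Record PreAdd := {
  Ob : Type;
  Hom : Ob -> Ob -> zmodType;
  cmp : forall X Y Z : Ob, Hom Y Z -> Hom X Y -> Hom X Z;
  idm : forall X : Ob, Hom X X;
  cmp_assoc : forall X Y Z W (h : Hom Z W) (g : Hom Y Z) (f : Hom X Y),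
      cmp h (cmp g f) = cmp (cmp h g) f;
  cmp_id_l : forall X Y (f : Hom X Y), cmp (idm Y) f = f;
  cmp_id_r : forall X Y (f : Hom X Y), cmp f (idm X) = f;
  cmp_addl : forall X Y Z (g1 g2 : Hom Y Z) (f : Hom X Y),
      cmp (g1 + g2) f = cmp g1 f + cmp g2 f;
  cmp_addr : forall X Y Z (g : Hom Y Z) (f1 f2 : Hom X Y),
      cmp g (f1 + f2) = cmp g f1 + cmp g f2
}.
Arguments cmp {p X Y Z}.
Arguments idm {p}.

Section Notions.
Variable C : PreAdd.

Definition mono (X Y : Ob C) (f : Hom X Y) : Prop :=
  forall W (g h : Hom W X), cmp f g = cmp f h -> g = h.
Definition epi (X Y : Ob C) (f : Hom X Y) : Prop :=
  forall W (g h : Hom Y W), cmp g f = cmp h f -> g = h.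

Definition is_kernel (X Y K : Ob C) (f : Hom X Y) (k : Hom K X) : Prop :=
  cmp f k = 0 /\
  forall W (g : Hom W X), cmp f g = 0 -> exists! u : Hom W K, cmp k u = g.

Definition is_cokernel (X Y Q : Ob C) (f : Hom X Y) (q : Hom Y Q) : Prop :=
  cmp q f = 0 /\
  forall W (g : Hom Y W), cmp g f = 0 -> exists! u : Hom Q W, cmp u q = g.

Definition is_zero_obj (Z : Ob C) : Prop := idm Z = 0.

Definition is_biprod (X Y P : Ob C) (i1 : Hom X P) (i2 : Hom Y P)
  (p1 : Hom P X) (p2 : Hom P Y) : Prop :=
  [/\ cmp p1 i1 = idm X, cmp p2 i2 = idm Y, cmp p1 i2 = 0,
      cmp p2 i1 = 0 & cmp i1 p1 + cmp i2 p2 = idm P].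

Definition is_unit_End (X : Ob C) (e : Hom X X) : Prop :=
  exists g : Hom X X, cmp e g = idm X /\ cmp g e = idm X.

Definition local_End (X : Ob C) : Prop :=
  idm X <> 0 /\ forall e : Hom X X, is_unit_End e \/ is_unit_End (idm X - e).
End Notions.

Record AbCat := {
  ab_pre :> PreAdd;
  ab_zero : exists Z : Ob ab_pre, is_zero_obj Z;
  ab_biprod : forall X Y : Ob ab_pre, exists P i1 i2 p1 p2,
      @is_biprod ab_pre X Y P i1 i2 p1 p2;
  ab_ker : forall (X Y : Ob ab_pre) (f : Hom X Y), exists K (k : Hom K X), is_kernel f k;
  ab_coker : forall (X Y : Ob ab_pre) (f : Hom X Y), exists Q (q : Hom Y Q), is_cokernel f q;
  ab_mono_ker : forall (X Y : Ob ab_pre) (m : Hom X Y), mono m ->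
      exists Z (g : Hom Y Z), is_kernel g m;
  ab_epi_coker : forall (X Y : Ob ab_pre) (e : Hom X Y), epi e ->
      exists Z (g : Hom Z X), is_cokernel g e
}.

Section Cx.
Variable C : AbCat.

(* objects: A -al-> B -fm-> C in degrees -2,-1,0 with al injective and the
   complex exact at B; for injective al this says exactly that al is a
   kernel of fm *)
Record Cx := {
  cA : Ob C; cB : Ob C; cC : Ob C;
  al : Hom cA cB;
  fm : Hom cB cC;
  cx_ker : is_kernel fm al
}.

Record CMap (X Y : Cx) := {
  mA : Hom (cA X) (cA Y);
  mB : Hom (cB X) (cB Y);
  mC : Hom (cC X) (cC Y);
  sq1 : cmp mB (al X) = cmp (al Y) mA;
  sq2 : cmp mC (fm X) = cmp (fm Y) mB
}.

Definition htpy (X Y : Cx)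
  (a : Hom (cA X) (cA Y)) (b : Hom (cB X) (cB Y)) (c : Hom (cC X) (cC Y))
  (a' : Hom (cA X) (cA Y)) (b' : Hom (cB X) (cB Y)) (c' : Hom (cC X) (cC Y)) : Prop :=
  exists (h1 : Hom (cB X) (cA Y)) (h2 : Hom (cC X) (cB Y)),
    [/\ a - a' = cmp h1 (al X),
        b - b' = cmp (al Y) h1 + cmp h2 (fm X)
      & c - c' = cmp (fm Y) h2].

Definition htpyM (X Y : Cx) (g h : CMap X Y) : Prop :=
  htpy (mA g) (mB g) (mC g) (mA h) (mB h) (mC h).

Definition epiA (X Y : Cx) (phi : CMap X Y) : Prop :=
  forall (Z : Cx) (g h : CMap Y Z),
    htpy (cmp (mA g) (mA phi)) (cmp (mB g) (mB phi)) (cmp (mC g) (mC phi))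
         (cmp (mA h) (mA phi)) (cmp (mB h) (mB phi)) (cmp (mC h) (mC phi)) ->
    htpyM g h.

Definition monoA (X Y : Cx) (phi : CMap X Y) : Prop :=
  forall (Z : Cx) (g h : CMap Z X),
    htpy (cmp (mA phi) (mA g)) (cmp (mB phi) (mB g)) (cmp (mC phi) (mC g))
         (cmp (mA phi) (mA h)) (cmp (mB phi) (mB h)) (cmp (mC phi) (mC h)) ->
    htpyM g h.

Definition zeroA (X : Cx) : Prop :=
  forall Z : Cx, (forall g h : CMap X Z, htpyM g h) /\ (forall g h : CMap Z X, htpyM g h).
End Cx.

From HB Require Import structures.
From mathcomp Require Import all_boot ssralg.
Import GRing.Theory.
Local Open Scope ring_scope.
Set Implicit Arguments. Unset Strict Implicit. Unset Printing Implicit Defensive.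

(* A homotopy between chain maps into [Y] is determined by its degree-0
   component, because [al Y] is a kernel of [fm Y]; so everything reduces to
   factorisations of degree-0 differences through [fm].
   (i) If [phi] is epi, the inclusion of [Y] into the complex with middle
   term [B' ⊕ C] and differential [(f', phi_C)] becomes null-homotopic after
   [phi], hence is null-homotopic: [f' x + phi_C s = 1] for some [x], [s].
   In the local ring [End C'] one summand is a unit; if it is [f' x] then
   [f'] is split epi and [Y] is zero, otherwise [phi_C] is split epi.
   (ii) Testing [monoA] against the complexes [0 -> 0 -> E] and
   [A -j-> B ⊕ Ker f' -> coker j] yields injectivity of [phibar] and a
   retraction of [j]; conversely these two facts let one factor a degree-0
   difference through [f] by a diagram chase, pulling back along epimorphisms
   instead of choosing preimages. *)

Local Notation "g ⊚ f" := (cmp g f) (at level 40, left associativity).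

Section PreAdditive.
Variable C : PreAdd.
Implicit Types X Y Z W : Ob C.

Lemma cmp0l X Y Z (f : Hom X Y) : (0 : Hom Y Z) ⊚ f = 0.
Proof.
have H := cmp_addl (0 : Hom Y Z) 0 f; rewrite addr0 in H.
by apply: (addrI (0 ⊚ f)); rewrite -H addr0.
Qed.

Lemma cmp0r X Y Z (g : Hom Y Z) : g ⊚ (0 : Hom X Y) = 0.
Proof.
have H := cmp_addr g (0 : Hom X Y) 0; rewrite addr0 in H.
by apply: (addrI (g ⊚ 0)); rewrite -H addr0.
Qed.

Lemma cmpNl X Y Z (g : Hom Y Z) (f : Hom X Y) : (- g) ⊚ f = - (g ⊚ f).
Proof. by apply: (addrI (g ⊚ f)); rewrite -cmp_addl !subrr cmp0l. Qed.

Lemma cmpNr X Y Z (g : Hom Y Z) (f : Hom X Y) : g ⊚ (- f) = - (g ⊚ f).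
Proof. by apply: (addrI (g ⊚ f)); rewrite -cmp_addr !subrr cmp0r. Qed.

Lemma cmpBl X Y Z (g1 g2 : Hom Y Z) (f : Hom X Y) : (g1 - g2) ⊚ f = g1 ⊚ f - g2 ⊚ f.
Proof. by rewrite cmp_addl cmpNl. Qed.

Lemma cmpBr X Y Z (g : Hom Y Z) (f1 f2 : Hom X Y) : g ⊚ (f1 - f2) = g ⊚ f1 - g ⊚ f2.
Proof. by rewrite cmp_addr cmpNr. Qed.

Lemma mono_zeroP X Y (m : Hom X Y) :
  mono m <-> forall W (x : Hom W X), m ⊚ x = 0 -> x = 0.
Proof.
split=> [Hm W x Hx | H W g h E]; first by apply: Hm; rewrite Hx cmp0r.
by apply/eqP; rewrite -subr_eq0; apply/eqP/H; rewrite cmpBr E subrr.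
Qed.

Lemma epi_zeroP X Y (e : Hom X Y) :
  epi e <-> forall W (x : Hom Y W), x ⊚ e = 0 -> x = 0.
Proof.
split=> [He W x Hx | H W g h E]; first by apply: He; rewrite Hx cmp0l.
by apply/eqP; rewrite -subr_eq0; apply/eqP/H; rewrite cmpBl E subrr.
Qed.

Lemma mono_cmp X Y Z (m : Hom Y Z) (k : Hom X Y) : mono m -> mono k -> mono (m ⊚ k).
Proof. by move=> Hm Hk W g h E; apply/Hk/Hm; rewrite !cmp_assoc. Qed.

Lemma kernel_mono X Y K (f : Hom X Y) (k : Hom K X) : is_kernel f k -> mono k.
Proof.
move=> [Hk U] W g h E.
have [v [_ Hv]] := U W (k ⊚ g) (ltac:(by rewrite cmp_assoc Hk cmp0l)).
by rewrite -(Hv g erefl) -(Hv h (esym E)).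
Qed.

Lemma cokernel_epi X Y Q (f : Hom X Y) (q : Hom Y Q) : is_cokernel f q -> epi q.
Proof.
move=> [Hq U] W g h E.
have [v [_ Hv]] := U W (g ⊚ q) (ltac:(by rewrite -cmp_assoc Hq cmp0r)).
by rewrite -(Hv g erefl) -(Hv h (esym E)).
Qed.

Lemma zero_obj_hom0 W Z (t : Hom W Z) : is_zero_obj Z -> t = 0.
Proof. by move=> HZ; rewrite -(cmp_id_l t) HZ cmp0l. Qed.

Lemma zero_obj_kernel Z E : is_zero_obj Z -> is_kernel (0 : Hom Z E) (0 : Hom Z Z).
Proof.
move=> HZ; split=> [|W t _]; first by rewrite cmp0l.
exists 0; split=> [|v _]; first by rewrite cmp0r (zero_obj_hom0 t HZ).
by rewrite (zero_obj_hom0 v HZ).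
Qed.

Lemma local_End_unit_summand X (a b : Hom X X) :
  local_End X -> a + b = idm X -> is_unit_End a \/ is_unit_End b.
Proof.
move=> [_ loc] Hab; have -> : b = idm X - a by rewrite -Hab addrAC subrr add0r.
exact: loc.
Qed.

End PreAdditive.

Section Abelian.
Variable C : AbCat.
Implicit Types X Y Z W : Ob C.

Lemma epi_cokernel_of_kernel X Y K (e : Hom X Y) (n : Hom K X) :
  epi e -> is_kernel e n -> is_cokernel n e.
Proof.
move=> He [Hn Un]; have [Z [g [Hge Ug]]] := ab_epi_coker He.
split=> // W v Hv; have [g' [Hg' _]] := Un _ g Hge.
have [w [Hw _]] := Ug W v (ltac:(by rewrite -Hg' cmp_assoc Hv cmp0l)).
by exists w; split=> // w' Hw'; apply: He; rewrite Hw Hw'.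
Qed.

Lemma mono_kernel_of_cokernel X Y Q (m : Hom X Y) (c : Hom Y Q) :
  mono m -> is_cokernel m c -> is_kernel c m.
Proof.
move=> Hm [Hc Uc]; have [Z [g [Hgm Ug]]] := ab_mono_ker Hm.
split=> // W v Hv; have [g' [Hg' _]] := Uc _ g Hgm.
have [w [Hw _]] := Ug W v (ltac:(by rewrite -Hg' -cmp_assoc Hv cmp0r)).
by exists w; split=> // w' Hw'; apply: Hm; rewrite Hw Hw'.
Qed.

(* [m] is the image [ker (coker f)] of [f]; the corestriction [e] is epi
   because the inclusion [ker (coker e)] into the image is split. *)
Lemma epi_onto_image X Y Q I (f : Hom X Y) (q : Hom Y Q) (m : Hom I Y) (e : Hom X I) :
  is_cokernel f q -> is_kernel q m -> m ⊚ e = f -> epi e.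
Proof.
move=> [Hq Uq] Km Hf; have Mm := kernel_mono Km; case: Km => Hm _.
have [R [c [Hce Uc]]] := ab_coker e.
have [K' [k' Kk']] := ab_ker c; have Mk' := kernel_mono Kk'; case: Kk' => Hck' Uk'.
have [e' [He' _]] := Uk' _ e Hce.
have [Z [g [Hgmk Ug]]] := ab_mono_ker (mono_cmp Mm Mk').
have gf0 : g ⊚ f = 0.
  by rewrite -Hf -He' !cmp_assoc -(cmp_assoc g m k') Hgmk cmp0l.
have [g' [Hg' _]] := Uq _ g gf0.
have [x [Hx _]] := Ug _ m (ltac:(by rewrite -Hg' -cmp_assoc Hm cmp0r)).
have k'x : k' ⊚ x = idm _ by apply: Mm; rewrite cmp_assoc Hx cmp_id_r.
have c0 : c = 0 by rewrite -(cmp_id_r c) -k'x cmp_assoc Hck' cmp0l.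
apply/epi_zeroP => W z Hz; have [z' [Hz' _]] := Uc W z Hz.
by rewrite -Hz' c0 cmp0r.
Qed.

Lemma pullback_epi X I W (e : Hom X I) (w : Hom W I) : epi e ->
  exists E (p : Hom E W) (y : Hom E X), epi p /\ e ⊚ y = w ⊚ p.
Proof.
move=> He; have [P [i1 [i2 [p1 [p2 [H11 H22 _ H21 _]]]]]] := ab_biprod X W.
pose h := e ⊚ p1 - w ⊚ p2.
have hi1 : h ⊚ i1 = e by rewrite cmpBl -!cmp_assoc H11 H21 cmp_id_r cmp0r subr0.
have [E [n Kn]] := ab_ker h.
have Eh : epi h.
  apply/epi_zeroP => V z Hz; apply/(epi_zeroP e).1 => //.
  by rewrite -hi1 cmp_assoc Hz cmp0l.
have [_ Uh] := epi_cokernel_of_kernel Eh Kn; case: Kn => Hhn _.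
exists E, (p2 ⊚ n), (p1 ⊚ n); split.
- apply/epi_zeroP => V v Hv.
  have [z [Hz _]] := Uh V (v ⊚ p2) (ltac:(by rewrite -cmp_assoc Hv)).
  have z0 : z = 0.
    by apply/(epi_zeroP e).1 => //; rewrite -hi1 cmp_assoc Hz -cmp_assoc H21 cmp0r.
  by rewrite -(cmp_id_r v) -H22 cmp_assoc -Hz z0 !cmp0l.
- by move/eqP: Hhn; rewrite cmpBl subr_eq0 !cmp_assoc => /eqP.
Qed.

(* Substitute for choosing preimages in a diagram chase: a map killed by
   [coker f] lifts through [f] after precomposing with an epimorphism. *)
Lemma cokernel_null_lift X Y Q W (f : Hom X Y) (q : Hom Y Q) (x : Hom W Y) :
  is_cokernel f q -> q ⊚ x = 0 ->
  exists E (p : Hom E W) (y : Hom E X), epi p /\ f ⊚ y = x ⊚ p.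
Proof.
move=> Hq Hqx; have [I [m Km]] := ab_ker q; have [_ Um] := Km.
have [e [He _]] := Um _ f Hq.1.
have [w [Hw _]] := Um _ x Hqx.
have [E [p [y [Hp Hy]]]] := pullback_epi w (epi_onto_image Hq Km He).
by exists E, p, y; split=> //; rewrite -He -cmp_assoc Hy cmp_assoc Hw.
Qed.

End Abelian.

Section Complexes.
Variable C : AbCat.
Implicit Types X Y Z : Cx C.

Definition cmap_comp X Y Z (g : CMap Y Z) (f : CMap X Y) : CMap X Z.
Proof.
apply: (@Build_CMap C X Z (mA g ⊚ mA f) (mB g ⊚ mB f) (mC g ⊚ mC f)).
- by rewrite -cmp_assoc sq1 !cmp_assoc sq1.
- by rewrite -cmp_assoc sq2 !cmp_assoc sq2.
Defined.

Definition cmap0 X Y : CMap X Y.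
Proof. by apply: (@Build_CMap C X Y 0 0 0); rewrite cmp0l cmp0r. Defined.

Lemma htpyM_of_fm X Y (g h : CMap X Y) (h2 : Hom (cC X) (cB Y)) :
  mC g - mC h = fm Y ⊚ h2 -> htpyM g h.
Proof.
move=> Hc; have [HfaX _] := cx_ker X; have KY := cx_ker Y.
have MY := kernel_mono KY; case: KY => _ UY.
have [h1 [Hh1 _]] := UY _ (mB g - mB h - h2 ⊚ fm X)
  (ltac:(by rewrite !cmpBr cmp_assoc -Hc cmpBl -!sq2 subrr)).
exists h1, h2; split; last by [].
- apply: MY; rewrite cmpBr -!sq1 cmp_assoc Hh1 !cmpBl.
  by rewrite -cmp_assoc HfaX cmp0r subr0.
- by rewrite Hh1 subrK.
Qed.

Lemma zeroA_of_fm_split Y (x : Hom (cC Y) (cB Y)) : fm Y ⊚ x = idm _ -> zeroA Y.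
Proof.
move=> Hx Z; split=> g h.
- apply: (htpyM_of_fm (h2 := (mB g - mB h) ⊚ x)).
  by rewrite -(cmp_id_r (mC g - mC h)) -Hx cmp_assoc cmpBl !sq2 -cmpBr cmp_assoc.
- by apply: (htpyM_of_fm (h2 := x ⊚ (mC g - mC h))); rewrite cmp_assoc Hx cmp_id_l.
Qed.

End Complexes.

Section Epimorphisms.
Variables (C : AbCat) (X Y : Cx C) (phi : CMap X Y).

Lemma epiA_of_split (s : Hom (cC Y) (cC X)) : mC phi ⊚ s = idm _ -> epiA phi.
Proof.
move=> Hs Z g h [_ [h2 [_ _ Hc]]].
apply: (htpyM_of_fm (h2 := h2 ⊚ s)).
by rewrite -(cmp_id_r (mC g - mC h)) -Hs cmp_assoc cmpBl Hc cmp_assoc.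
Qed.

Lemma epiA_split_sum : epiA phi ->
  exists (x : Hom (cC Y) (cB Y)) (s : Hom (cC Y) (cC X)),
    fm Y ⊚ x + mC phi ⊚ s = idm (cC Y).
Proof.
move=> Hepi.
have [P [i1 [i2 [p1 [p2 [H11 H22 H12 H21 _]]]]]] := ab_biprod (cB Y) (cC X).
pose g := fm Y ⊚ p1 + mC phi ⊚ p2.
have gi1 : g ⊚ i1 = fm Y.
  by rewrite cmp_addl -!cmp_assoc H11 H21 cmp0r addr0 cmp_id_r.
have gi2 : g ⊚ i2 = mC phi.
  by rewrite cmp_addl -!cmp_assoc H12 H22 cmp0r add0r cmp_id_r.
have [KZ [aZ Kg]] := ab_ker g; have [_ Ug] := Kg.
have [dA [HdA _]] := Ug _ (i1 ⊚ al Y) (ltac:(by rewrite cmp_assoc gi1 (cx_ker Y).1)).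
pose Z := Build_Cx Kg.
have s1 : i1 ⊚ al Y = al Z ⊚ dA by rewrite HdA.
have s2 : idm (cC Y) ⊚ fm Y = fm Z ⊚ i1 by rewrite cmp_id_l gi1.
pose d := @Build_CMap C Y Z _ _ _ s1 s2.
have [_ [k2 [_ _ /= Hk2]]] : htpyM d (cmap0 Y Z).
  apply: Hepi; apply: (htpyM_of_fm (g := cmap_comp d phi)
    (h := cmap_comp (cmap0 Y Z) phi) (h2 := i2)).
  by rewrite /= cmp0l subr0 cmp_id_l gi2.
exists (p1 ⊚ k2), (p2 ⊚ k2).
by rewrite subr0 in Hk2; rewrite Hk2 /= cmp_addl -!cmp_assoc.
Qed.

Lemma epiA_iff_split : ~ zeroA Y -> local_End (cC Y) ->
  (epiA phi <-> exists s : Hom (cC Y) (cC X), mC phi ⊚ s = idm (cC Y)).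
Proof.
move=> nzY locY; split=> [/epiA_split_sum [x [s Hxs]] | [s Hs]]; last first.
  exact: epiA_of_split Hs.
case: (local_End_unit_summand locY Hxs) => [[v [Hv _]] | [v [Hv _]]].
- by case: nzY; apply: (zeroA_of_fm_split (x := x ⊚ v)); rewrite cmp_assoc.
- by exists (s ⊚ v); rewrite cmp_assoc.
Qed.

End Epimorphisms.

Section Monomorphisms.
Variables (C : AbCat) (X Y : Cx C) (phi : CMap X Y).
Variables (Q Q' : Ob C) (q : Hom (cC X) Q) (q' : Hom (cC Y) Q') (phibar : Hom Q Q').
Hypotheses (Hq : is_cokernel (fm X) q) (Hq' : is_cokernel (fm Y) q')
  (Hphibar : phibar ⊚ q = q' ⊚ mC phi).
Variables (K : Ob C) (k : Hom K (cB Y)) (u : Hom (cA X) K).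
Hypotheses (Hk : is_kernel (fm Y) k) (Hu : k ⊚ u = mB phi ⊚ al X).
Variables (P : Ob C) (i1 : Hom (cB X) P) (i2 : Hom K P).
Variables (p1 : Hom P (cB X)) (p2 : Hom P K).
Hypothesis HP : is_biprod i1 i2 p1 p2.

Local Notation j := (i1 ⊚ al X - i2 ⊚ u).

Lemma p1_j : p1 ⊚ j = al X.
Proof.
by case: HP => H11 _ H12 _ _; rewrite cmpBr !cmp_assoc H11 H12 cmp_id_l cmp0l subr0.
Qed.

Lemma p2_j : p2 ⊚ j = - u.
Proof.
by case: HP => _ H22 _ H21 _; rewrite cmpBr !cmp_assoc H21 H22 cmp_id_l cmp0l sub0r.
Qed.

Lemma j_mono : mono j.
Proof.
apply/mono_zeroP => W x Hx; apply/(mono_zeroP _).1; first exact: kernel_mono (cx_ker X).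
by rewrite -p1_j -cmp_assoc Hx cmp0r.
Qed.

(* Pulled back along [q] and lifted through [fm Y], [x] yields a chain map
   [(0 -> 0 -> E2) -> X] that becomes null-homotopic after [phi]. *)
Lemma phibar_mono_of_monoA : monoA phi -> mono phibar.
Proof.
move=> Hmono; apply/mono_zeroP => W x Hx.
have [E1 [pp1 [y1 [Hp1 Hy1]]]] := pullback_epi x (cokernel_epi Hq).
have [E2 [pp2 [y2 [Hp2 Hy2]]]] := cokernel_null_lift (x := mC phi ⊚ y1) Hq'
  (ltac:(by rewrite cmp_assoc -Hphibar -cmp_assoc Hy1 cmp_assoc Hx cmp0l)).
have [Z0 HZ0] := ab_zero C.
pose Z := Build_Cx (zero_obj_kernel E2 HZ0).
have s1 : (0 : Hom Z0 (cB X)) ⊚ al Z = al X ⊚ 0 by rewrite cmp0l cmp0r.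
have s2 : (y1 ⊚ pp2) ⊚ fm Z = fm X ⊚ 0 by rewrite !cmp0r.
pose d := @Build_CMap C Z X _ _ _ s1 s2.
have [_ [k2 [_ _ /= Hk2]]] : htpyM d (cmap0 Z X).
  apply: Hmono; apply: (htpyM_of_fm (g := cmap_comp phi d)
    (h := cmap_comp phi (cmap0 Z X)) (h2 := y2)).
  by rewrite /= cmp0r subr0 Hy2 cmp_assoc.
rewrite subr0 in Hk2.
apply/(epi_zeroP pp1).1 => //; apply/(epi_zeroP pp2).1 => //.
by rewrite -Hy1 -cmp_assoc Hk2 cmp_assoc Hq.1 cmp0l.
Qed.

(* The projection [d] of [A -j-> P -> coker j] onto [X] is null-homotopic
   after [phi], hence null-homotopic; as [mA d = 1], the degree -1 to -2
   part of that homotopy is a retraction of [j]. *)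
Lemma retraction_of_monoA : monoA phi ->
  exists r : Hom P (cA X), r ⊚ j = idm (cA X).
Proof.
move=> Hmono; have [R [c Hc]] := ab_coker j.
have Kj := mono_kernel_of_cokernel j_mono Hc; have Ec := cokernel_epi Hc.
case: Hc => Hcj Uc; pose Z := Build_Cx Kj.
have [dC [HdC _]] := Uc _ (fm X ⊚ p1)
  (ltac:(by rewrite -cmp_assoc p1_j (cx_ker X).1)).
have [h2 [Hh2 _]] := Uc _ (mB phi ⊚ p1 + k ⊚ p2)
  (ltac:(by rewrite cmp_addl -!cmp_assoc p1_j p2_j cmpNr Hu subrr)).
have s1 : p1 ⊚ al Z = al X ⊚ idm _ by rewrite cmp_id_r p1_j.
have s2 : dC ⊚ fm Z = fm X ⊚ p1 by rewrite HdC.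
pose d := @Build_CMap C Z X _ _ _ s1 s2.
have [r [_ [/= Hr _ _]]] : htpyM d (cmap0 Z X).
  apply: Hmono; apply: (htpyM_of_fm (g := cmap_comp phi d)
    (h := cmap_comp phi (cmap0 Z X)) (h2 := h2)).
  rewrite /= cmp0r subr0; apply: Ec.
  rewrite -cmp_assoc HdC -cmp_assoc Hh2 cmp_addr cmp_assoc.
  by rewrite (sq2 phi) !cmp_assoc Hk.1 cmp0l addr0.
by exists r; rewrite -Hr subr0.
Qed.

(* Diagram chase: lift [dC] locally through [fm X] as [y], correct the
   resulting element [(y, g')] of [P] by [1 - j r] so that it descends
   along the cover [p]. *)
Lemma fm_factor_of_phibar_mono (r : Hom P (cA X)) :
  mono phibar -> r ⊚ j = idm (cA X) ->
  forall W (dC : Hom W (cC X)) (t : Hom W (cB Y)),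
    mC phi ⊚ dC = fm Y ⊚ t -> exists h2 : Hom W (cB X), fm X ⊚ h2 = dC.
Proof.
move=> Mbar Hr W dC t Ht.
have qd : q ⊚ dC = 0.
  apply: (mono_zeroP phibar).1 Mbar _ _ _.
  by rewrite cmp_assoc Hphibar -cmp_assoc Ht cmp_assoc Hq'.1 cmp0l.
have [E [p [y [Hp Hy]]]] := cokernel_null_lift Hq qd.
have [g' [Hg' _]] := Hk.2 _ (t ⊚ p - mB phi ⊚ y)
  (ltac:(by rewrite cmpBr !cmp_assoc -Ht -(sq2 phi) -!cmp_assoc Hy subrr)).
pose G := (idm P - j ⊚ r) ⊚ (i1 ⊚ y + i2 ⊚ g').
have [N [n Kn]] := ab_ker p; have [Hpn _] := Kn.
have [a' [Ha' _]] := (cx_ker X).2 _ (y ⊚ n)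
  (ltac:(by rewrite cmp_assoc Hy -cmp_assoc Hpn cmp0r)).
have g'n : g' ⊚ n = - (u ⊚ a').
  apply: (kernel_mono Hk); rewrite cmp_assoc Hg' cmpBl -cmp_assoc Hpn cmp0r sub0r.
  by rewrite cmpNr -cmp_assoc -Ha' !cmp_assoc Hu.
have Gn : G ⊚ n = 0.
  rewrite -cmp_assoc.
  have -> : (i1 ⊚ y + i2 ⊚ g') ⊚ n = j ⊚ a'.
    by rewrite cmp_addl -!cmp_assoc g'n -Ha' cmpNr cmpBl !cmp_assoc.
  by rewrite cmpBl cmp_id_l -!cmp_assoc (cmp_assoc r j) Hr cmp_id_l subrr.
have [s' [Hs' _]] := (epi_cokernel_of_kernel Hp Kn).2 _ G Gn.
exists (p1 ⊚ s'); apply: Hp.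
have p1G : p1 ⊚ G = y - al X ⊚ (r ⊚ (i1 ⊚ y + i2 ⊚ g')).
  case: HP => H11 _ H12 _ _.
  rewrite /G cmp_assoc cmpBr cmp_id_r (cmp_assoc p1 j r) p1_j cmpBl cmp_addr.
  by rewrite !cmp_assoc H11 H12 cmp_id_l cmp0l addr0.
by rewrite -!cmp_assoc Hs' p1G cmpBr cmp_assoc (cx_ker X).1 cmp0l subr0 Hy.
Qed.

Lemma monoA_of_phibar_mono (r : Hom P (cA X)) :
  mono phibar -> r ⊚ j = idm (cA X) -> monoA phi.
Proof.
move=> Mbar Hr Z g h [_ [t [_ _ Ht]]].
have [h2 Hh2] := fm_factor_of_phibar_mono Mbar Hr (dC := mC g - mC h) (t := t)
  (ltac:(by rewrite cmpBr)).
exact: htpyM_of_fm (esym Hh2).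
Qed.

End Monomorphisms.

Theorem lemma3p1 (C : AbCat) (X Y : Cx C) (phi : CMap X Y) :
  (~ zeroA Y -> local_End (cC Y) ->
     (epiA phi <-> exists s : Hom (cC Y) (cC X), cmp (mC phi) s = idm (cC Y)))
  /\
  (forall (Q Q' : Ob C) (q : Hom (cC X) Q) (q' : Hom (cC Y) Q') (phibar : Hom Q Q'),
     is_cokernel (fm X) q -> is_cokernel (fm Y) q' ->
     cmp phibar q = cmp q' (mC phi) ->
   forall (K : Ob C) (k : Hom K (cB Y)) (u : Hom (cA X) K),
     is_kernel (fm Y) k -> cmp k u = cmp (mB phi) (al X) ->
   forall (P : Ob C) (i1 : Hom (cB X) P) (i2 : Hom K P) (p1 : Hom P (cB X)) (p2 : Hom P K),
     is_biprod i1 i2 p1 p2 ->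
     (monoA phi <->
        (mono phibar /\
         exists r : Hom P (cA X), cmp r (cmp i1 (al X) - cmp i2 u) = idm (cA X)))).
Proof.
split; first exact: epiA_iff_split.
move=> Q Q' q q' phibar Hq Hq' Hphibar K k u Hk Hu P i1 i2 p1 p2 HP; split.
- move=> Hmono; split.
  + exact: (phibar_mono_of_monoA Hq Hq' Hphibar Hmono).
  + exact: (retraction_of_monoA Hk Hu HP Hmono).
- move=> [Mbar [r Hr]].
  exact: (monoA_of_phibar_mono Hq Hq' Hphibar Hk Hu HP Mbar Hr).
Qed.
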